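(* Let $\mathbb{C}$ be a regular Gumm category. Suppose given objects and morphisms $\varphi\colon P\to Z$, $\sigma\colon Z\to P$, $x\colon P\to X$, $f\colon X\to Y$, $s\colon Y\to X$, $y\colon Z\to Y$, $u\colon X\to U$, $v\colon Y\to V$, $w\colon U\to V$ in $\mathbb{C}$ such that: (i) $\varphi\sigma=1_Z$ and $fs=1_Y$ (so $\varphi$ and $f$ are split epimorphisms), $x\sigma=sy$, and $fx=y\varphi$; (ii) $x$ and $y$ are regular epimorphisms; (iii) $wu=vf$; (iv) the outer rectangle is a pullback, i.e. the square with sides $\varphi\colon P\to Z$, $ux\colon P\to U$, $vy\colon Z\to V$, $w\colon U\to V$ is a pullback (so $P\cong Z\times_V U$). Then both the left square ($fx=y\varphi$) and the right square ($wu=vf$) are pullbacks.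
   Context: A regular category is a finitely complete category in which every kernel pair has a coequaliser and regular epimorphisms are stable under pullback. For equivalence relations $R,S$ on an object $X$ of a finitely complete category, $R\,\square\, S$ denotes the largest double equivalence relation on $R$ and $S$: in terms of generalized elements, it is the relation on $R$ consisting of pairs $((a,b),(c,d))$ with $(a,b),(c,d)\in R$, $(a,c)\in S$ and $(b,d)\in S$; its two projections $\pi_1,\pi_2\colon R\square S\to R$ send such a pair to $(a,b)$ and $(c,d)$ respectively. If $T$ is another equivalence relation on $X$ with $R\wedge S\le T\le R$, there is a canonical inclusion $(i,j)$ of $T\square S$ into $R\square S$ over the inclusion $i\colon T\to R$. A finitely complete category is a Gumm category if for all equivalence relations $R,S,T$ on a same object with $R\wedge S\le T\le R$, this inclusion is a discrete fibration, i.e. the commutative squares $i\pi_k=\pi_k j$ ($k=1,2$) are pullbacks. *)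

Record Category := {
  Ob :> Type;
  Hom : Ob -> Ob -> Type;
  idm : forall A, Hom A A;
  comp : forall A B C, Hom B C -> Hom A B -> Hom A C;
  comp_assoc : forall A B C D (h : Hom C D) (g : Hom B C) (f : Hom A B),
      comp A C D h (comp A B C g f) = comp A B D (comp B C D h g) f;
  comp_id_l : forall A B (f : Hom A B), comp A B B (idm B) f = f;
  comp_id_r : forall A B (f : Hom A B), comp A A B f (idm A) = f
}.

Arguments Hom {c} _ _.
Arguments idm {c} _.
Arguments comp {c A B C} _ _.

Declare Scope cat_scope.
Notation "A ~> B" := (Hom A B) (at level 90, right associativity) : cat_scope.
(* g ∘ f = "first f, then g" *)
Notation "g ∘ f" := (comp g f) (at level 40, left associativity) : cat_scope.
Open Scope cat_scope.

Section Defs.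
Context {C : Category}.

Definition is_pullback {A B C0 P : C} (f : A ~> C0) (g : B ~> C0)
    (p1 : P ~> A) (p2 : P ~> B) : Prop :=
  f ∘ p1 = g ∘ p2 /\
  forall (Q : C) (q1 : Q ~> A) (q2 : Q ~> B), f ∘ q1 = g ∘ q2 ->
    exists! h : Q ~> P, p1 ∘ h = q1 /\ p2 ∘ h = q2.

Definition is_terminal (T : C) : Prop :=
  forall A : C, exists! t : A ~> T, True.

Definition finitely_complete : Prop :=
  (exists T : C, is_terminal T) /\
  forall (A B C0 : C) (f : A ~> C0) (g : B ~> C0),
    exists (P : C) (p1 : P ~> A) (p2 : P ~> B), is_pullback f g p1 p2.

Definition is_coequalizer {A B Q : C} (a b : A ~> B) (e : B ~> Q) : Prop :=
  e ∘ a = e ∘ b /\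
  forall (W : C) (h : B ~> W), h ∘ a = h ∘ b ->
    exists! k : Q ~> W, k ∘ e = h.

Definition regular_epi {B Q : C} (e : B ~> Q) : Prop :=
  exists (K : C) (a b : K ~> B), is_coequalizer a b e.

Definition regular_category : Prop :=
  finitely_complete /\
  (forall (A B K : C) (f : A ~> B) (k1 k2 : K ~> A),
      is_pullback f f k1 k2 -> exists (Q : C) (e : A ~> Q), is_coequalizer k1 k2 e) /\
  (forall (A B C0 P : C) (f : A ~> C0) (g : B ~> C0) (p1 : P ~> A) (p2 : P ~> B),
      is_pullback f g p1 p2 -> regular_epi f -> regular_epi p2).

Definition jointly_monic {D X Y : C} (p1 : D ~> X) (p2 : D ~> Y) : Prop :=
  forall (T : C) (h k : T ~> D), p1 ∘ h = p1 ∘ k -> p2 ∘ h = p2 ∘ k -> h = k.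

(* Equivalence relations on X, as jointly monic spans, with reflexivity,
   symmetry and transitivity expressed on generalized elements. *)
Definition rel_mem {X R : C} (r1 r2 : R ~> X) {T : C} (a b : T ~> X) : Prop :=
  exists h : T ~> R, r1 ∘ h = a /\ r2 ∘ h = b.

Record EqRel (X : C) := {
  er_ob : C;
  er1 : er_ob ~> X;
  er2 : er_ob ~> X;
  er_monic : jointly_monic er1 er2;
  er_refl : forall (T : C) (a : T ~> X), rel_mem er1 er2 a a;
  er_sym : forall (T : C) (a b : T ~> X), rel_mem er1 er2 a b -> rel_mem er1 er2 b a;
  er_trans : forall (T : C) (a b c : T ~> X),
      rel_mem er1 er2 a b -> rel_mem er1 er2 b c -> rel_mem er1 er2 a c
}.

Arguments er_ob {X} _.
Arguments er1 {X} _.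
Arguments er2 {X} _.

Definition inrel {X : C} (R : EqRel X) {T : C} (a b : T ~> X) : Prop :=
  rel_mem (er1 R) (er2 R) a b.

(* (D, p1, p2) represents R □ S: the relation on R of pairs ((a,b),(c,d))
   with (a,c) ∈ S and (b,d) ∈ S; p1, p2 its two projections to R. *)
Definition is_box {X : C} (R S : EqRel X) (D : C) (p1 p2 : D ~> er_ob R) : Prop :=
  jointly_monic p1 p2 /\
  forall (T : C) (p q : T ~> er_ob R),
    rel_mem p1 p2 p q <->
    (inrel S (er1 R ∘ p) (er1 R ∘ q) /\ inrel S (er2 R ∘ p) (er2 R ∘ q)).

(* Gumm category: for R ∧ S ≤ T ≤ R, the canonical inclusion (i, j) of T □ S
   into R □ S is a discrete fibration: the squares i π_k = π_k j are pullbacks. *)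
Definition gumm_category : Prop :=
  forall (X : C) (R S T : EqRel X),
    (forall (Q : C) (a b : Q ~> X), inrel R a b -> inrel S a b -> inrel T a b) ->
    (forall (Q : C) (a b : Q ~> X), inrel T a b -> inrel R a b) ->
    forall (i : er_ob T ~> er_ob R), er1 R ∘ i = er1 T -> er2 R ∘ i = er2 T ->
    forall (D1 : C) (p1 p2 : D1 ~> er_ob R) (D2 : C) (q1 q2 : D2 ~> er_ob T),
      is_box R S D1 p1 p2 -> is_box T S D2 q1 q2 ->
      forall j : D2 ~> D1, p1 ∘ j = i ∘ q1 -> p2 ∘ j = i ∘ q2 ->
        is_pullback i p1 q1 j /\ is_pullback i p2 q2 j.

End Defs.

Arguments finitely_complete C : clear implicits.
Arguments regular_category C : clear implicits.
Arguments gumm_category C : clear implicits.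

From Stdlib Require Import Setoid.

(* Consider the kernel pairs of u x, phi and x on P.  Since the outer rectangle
   is a pullback, ker(u x) /\ ker phi is trivial, so ker x lies between it and
   ker(u x).  For a, b with f x a = f x b and u x a = u x b, the pair
   (sigma phi a, sigma phi b) is in ker x (because x sigma phi = s f x), and it is
   linked to (a, b) in ker(u x) by ker phi; Gumm's Shifting Lemma then puts
   (a, b) in ker x.  So (f, u) is jointly monic on the image of x, hence on X as
   x is a regular epimorphism.  This lets factorisations through the outer
   pullback descend along the regular epimorphism y, making the right square a
   pullback, and the left square follows by pullback pasting. *)

Ltac reassoc_in H := repeat rewrite <- comp_assoc in H.
Ltac reassoc := repeat rewrite <- comp_assoc.

Section Basics.
Context {C : Category}.

Definition monic {A B : C} (m : A ~> B) : Prop :=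
  forall (T : C) (h k : T ~> A), m ∘ h = m ∘ k -> h = k.

Lemma square_precomp {A B D E : C} {g : B ~> D} {f : A ~> B} {g' : E ~> D} {f' : A ~> E}
    (H : g ∘ f = g' ∘ f') {W : C} (h : W ~> A) : g ∘ (f ∘ h) = g' ∘ (f' ∘ h).
Proof. rewrite !comp_assoc, H. reflexivity. Qed.

Lemma triangle_precomp {A B D : C} {g : B ~> D} {f : A ~> B} {e : A ~> D}
    (H : g ∘ f = e) {W : C} (h : W ~> A) : g ∘ (f ∘ h) = e ∘ h.
Proof. rewrite comp_assoc, H. reflexivity. Qed.

Section Pullback.
Context {A B C0 P : C} {f : A ~> C0} {g : B ~> C0} {p1 : P ~> A} {p2 : P ~> B}.
Hypothesis Hpb : is_pullback f g p1 p2.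

Lemma pullback_commutes : f ∘ p1 = g ∘ p2.
Proof. apply Hpb. Qed.

Lemma pullback_factor {Q : C} (q1 : Q ~> A) (q2 : Q ~> B) :
  f ∘ q1 = g ∘ q2 -> exists h : Q ~> P, p1 ∘ h = q1 /\ p2 ∘ h = q2.
Proof.
  intro E. destruct (proj2 Hpb Q q1 q2 E) as [h [Hh _]]. exists h. exact Hh.
Qed.

Lemma pullback_legs_jointly_monic : jointly_monic p1 p2.
Proof.
  intros T h k E1 E2.
  destruct (proj2 Hpb T (p1 ∘ h) (p2 ∘ h)) as [m [_ Hm]].
  { rewrite !comp_assoc, pullback_commutes. reflexivity. }
  rewrite <- (Hm h (conj eq_refl eq_refl)). apply Hm. split; symmetry; assumption.
Qed.

End Pullback.

Lemma regular_epi_epi {B Q : C} (e : B ~> Q) : regular_epi e ->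
  forall (W : C) (h k : Q ~> W), h ∘ e = k ∘ e -> h = k.
Proof.
  intros [K [a [b [Hc Hu]]]] W h k E.
  destruct (Hu W (h ∘ e)) as [m [_ Hm]].
  { rewrite <- !comp_assoc, Hc. reflexivity. }
  rewrite <- (Hm h eq_refl), <- (Hm k (eq_sym E)). reflexivity.
Qed.

Lemma regular_epi_factor {E Q X Y U : C} (e : E ~> Q) (g : E ~> X)
    (f : X ~> Y) (u : X ~> U) (q1 : Q ~> Y) (q2 : Q ~> U) :
  regular_epi e -> jointly_monic f u -> f ∘ g = q1 ∘ e -> u ∘ g = q2 ∘ e ->
  exists k : Q ~> X, k ∘ e = g /\ f ∘ k = q1 /\ u ∘ k = q2.
Proof.
  intros He Hfu Ef Eu.
  pose proof (regular_epi_epi e He) as Hepi.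
  destruct He as [K [a [b [Hc Hu]]]].
  destruct (Hu X g) as [k [Hk _]].
  { apply Hfu; rewrite !comp_assoc; [rewrite Ef | rewrite Eu];
      rewrite <- !comp_assoc, Hc; reflexivity. }
  exists k. split; [exact Hk|].
  split; apply Hepi; rewrite <- comp_assoc, Hk; assumption.
Qed.

End Basics.

Section Boxes.
Context {C : Category}.
Hypothesis HF : finitely_complete C.

Lemma product_exists (A B : C) :
  exists (Pr : C) (pi1 : Pr ~> A) (pi2 : Pr ~> B), jointly_monic pi1 pi2 /\
    forall (Q : C) (q1 : Q ~> A) (q2 : Q ~> B),
      exists h : Q ~> Pr, pi1 ∘ h = q1 /\ pi2 ∘ h = q2.
Proof.
  destruct HF as [[T HT] Hpb].
  destruct (HT A) as [tA _], (HT B) as [tB _].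
  destruct (Hpb A B T tA tB) as [Pr [pi1 [pi2 Hp]]].
  exists Pr, pi1, pi2. split; [exact (pullback_legs_jointly_monic Hp)|].
  intros Q q1 q2. apply (pullback_factor Hp).
  destruct (HT Q) as [tQ [_ HtQ]].
  rewrite <- (HtQ (tA ∘ q1) I), <- (HtQ (tB ∘ q2) I). reflexivity.
Qed.

(* The pullback of <s1, s2> : S -> X × X along <g1, g2> : A -> X × X. *)
Lemma relation_preimage_exists {X A S : C} (s1 s2 : S ~> X) (g1 g2 : A ~> X) :
  jointly_monic s1 s2 ->
  exists (M : C) (m : M ~> A), monic m /\
    forall (T : C) (a : T ~> A),
      (exists t : T ~> M, m ∘ t = a) <-> rel_mem s1 s2 (g1 ∘ a) (g2 ∘ a).
Proof.
  intro Hs.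
  destruct (product_exists X X) as [XX [x1 [x2 [Hxm Hxp]]]].
  destruct (Hxp S s1 s2) as [ms [Hms1 Hms2]].
  destruct (Hxp A g1 g2) as [mg [Hmg1 Hmg2]].
  destruct (proj2 HF _ _ _ ms mg) as [M [a [m Hpb]]].
  pose proof (pullback_commutes Hpb) as Hsq.
  assert (Hms : monic ms).
  { intros T h k E. apply Hs.
    - rewrite <- Hms1, <- !comp_assoc, E. reflexivity.
    - rewrite <- Hms2, <- !comp_assoc, E. reflexivity. }
  exists M, m. split.
  - intros T h k E. apply (pullback_legs_jointly_monic Hpb); [|exact E].
    apply Hms. rewrite !(square_precomp Hsq), E. reflexivity.
  - intros T b. split.
    + intros [t <-]. exists (a ∘ t).
      rewrite <- Hms1, <- Hms2, <- Hmg1, <- Hmg2.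
      reassoc. rewrite !(square_precomp Hsq). split; reflexivity.
    + intros [z [Hz1 Hz2]].
      destruct (pullback_factor Hpb z b) as [t [_ Ht]]; [|exists t; exact Ht].
      apply Hxm; reassoc.
      * rewrite (triangle_precomp Hms1), (triangle_precomp Hmg1). exact Hz1.
      * rewrite (triangle_precomp Hms2), (triangle_precomp Hmg2). exact Hz2.
Qed.

(* R □ S is cut out of R × R by two successive relation preimages. *)
Lemma box_exists {X : C} (R S : EqRel X) :
  exists (D : C) (p1 p2 : D ~> er_ob _ R), is_box R S D p1 p2.
Proof.
  destruct (product_exists (er_ob _ R) (er_ob _ R)) as [RR [pi1 [pi2 [Hpim Hpip]]]].
  destruct (relation_preimage_exists (er1 _ S) (er2 _ S)
              (er1 _ R ∘ pi1) (er1 _ R ∘ pi2) (er_monic _ S)) as [M1 [m1 [Hm1 H1]]].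
  destruct (relation_preimage_exists (er1 _ S) (er2 _ S)
              (er2 _ R ∘ pi1 ∘ m1) (er2 _ R ∘ pi2 ∘ m1) (er_monic _ S)) as [M2 [m2 [Hm2 H2]]].
  exists M2, (pi1 ∘ (m1 ∘ m2)), (pi2 ∘ (m1 ∘ m2)). split.
  - intros T h k E1 E2. reassoc_in E1. reassoc_in E2.
    apply Hm2, Hm1. reassoc. apply Hpim; assumption.
  - intros T p q. unfold inrel. split.
    + intros [h [<- <-]]. split.
      * specialize (proj1 (H1 T (m1 ∘ (m2 ∘ h))) (ex_intro _ (m2 ∘ h) eq_refl)).
        reassoc. tauto.
      * specialize (proj1 (H2 T (m2 ∘ h)) (ex_intro _ h eq_refl)).
        reassoc. tauto.
    + intros [HS1 HS2].
      destruct (Hpip T p q) as [t [Ht1 Ht2]].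
      destruct (proj2 (H1 T t)) as [t1 Ht1'].
      { reassoc. rewrite Ht1, Ht2. exact HS1. }
      destruct (proj2 (H2 T t1)) as [t2 Ht2'].
      { reassoc. rewrite Ht1', Ht1, Ht2. exact HS2. }
      exists t2. reassoc. rewrite Ht2', Ht1'. split; assumption.
Qed.

End Boxes.

Section KernelPairs.
Context {C : Category}.

Lemma kernel_pair_mem {A B K : C} {g : A ~> B} {k1 k2 : K ~> A}
    (H : is_pullback g g k1 k2) {T : C} (a b : T ~> A) :
  rel_mem k1 k2 a b <-> g ∘ a = g ∘ b.
Proof.
  split.
  - intros [h [<- <-]]. apply (square_precomp (pullback_commutes H)).
  - exact (pullback_factor H a b).
Qed.

Definition kernel_pair_eqrel {A B K : C} {g : A ~> B} {k1 k2 : K ~> A}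
    (H : is_pullback g g k1 k2) : EqRel A.
Proof.
  refine (Build_EqRel A K k1 k2 (pullback_legs_jointly_monic H) _ _ _);
    intros T; setoid_rewrite (kernel_pair_mem H); congruence.
Defined.

End KernelPairs.

Section Shifting.
Context {C : Category}.
Hypotheses (HF : finitely_complete C) (HG : gumm_category C).

Lemma box_projections_rel {X : C} {R S : EqRel X} {D : C} {p1 p2 : D ~> er_ob _ R} :
  is_box R S D p1 p2 ->
  inrel S (er1 _ R ∘ p1) (er1 _ R ∘ p2) /\ inrel S (er2 _ R ∘ p1) (er2 _ R ∘ p2).
Proof.
  intros [_ Hbox]. apply Hbox. exists (idm D). split; apply comp_id_r.
Qed.

Lemma gumm_shifting {X : C} (R S T : EqRel X) :
  (forall (Q : C) (a b : Q ~> X), inrel R a b -> inrel S a b -> inrel T a b) ->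
  (forall (Q : C) (a b : Q ~> X), inrel T a b -> inrel R a b) ->
  forall (W : C) (a b c d : W ~> X),
    inrel T c d -> inrel R a b -> inrel S c a -> inrel S d b -> inrel T a b.
Proof.
  intros HRST HTR W a b c d [t [Htc Htd]] [r [Hra Hrb]] Hca Hdb.
  destruct (HTR _ (er1 _ T) (er2 _ T)) as [i [Hi1 Hi2]].
  { exists (idm _). split; apply comp_id_r. }
  destruct (box_exists HF R S) as [D1 [p1 [p2 HB1]]].
  destruct (box_exists HF T S) as [D2 [q1 [q2 HB2]]].
  destruct (proj2 HB1 _ (i ∘ q1) (i ∘ q2)) as [_ [j [Hj1 Hj2]]].
  { rewrite !(triangle_precomp Hi1), !(triangle_precomp Hi2).
    exact (box_projections_rel HB2). }
  destruct (HG X R S T HRST HTR i Hi1 Hi2 D1 p1 p2 D2 q1 q2 HB1 HB2 j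
              Hj1 Hj2) as [Hfib _].
  destruct (proj2 HB1 _ (i ∘ t) r) as [_ [m [Hm1 Hm2]]].
  { rewrite (triangle_precomp Hi1), (triangle_precomp Hi2), Htc, Htd, Hra, Hrb.
    split; assumption. }
  destruct (pullback_factor Hfib t m (eq_sym Hm1)) as [h [Hh1 Hh2]].
  exists (q2 ∘ h).
  rewrite <- Hi1, <- Hi2, <- Hra, <- Hrb. reassoc.
  rewrite <- (square_precomp Hj2), Hh2, Hm2. split; reflexivity.
Qed.

Lemma gumm_kernel_shifting {P A B E : C} (g : P ~> A) (p : P ~> B) (e : P ~> E) :
  (forall (Q : C) (a b : Q ~> P), g ∘ a = g ∘ b -> p ∘ a = p ∘ b -> e ∘ a = e ∘ b) ->
  (forall (Q : C) (a b : Q ~> P), e ∘ a = e ∘ b -> g ∘ a = g ∘ b) ->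
  forall (W : C) (a b c d : W ~> P),
    e ∘ c = e ∘ d -> g ∘ a = g ∘ b -> p ∘ c = p ∘ a -> p ∘ d = p ∘ b -> e ∘ a = e ∘ b.
Proof.
  intros Hmeet Hle W a b c d.
  destruct (proj2 HF _ _ _ g g) as [Kg [g1 [g2 Hg]]].
  destruct (proj2 HF _ _ _ p p) as [Kp [p1 [p2 Hp]]].
  destruct (proj2 HF _ _ _ e e) as [Ke [e1 [e2 He]]].
  pose proof (gumm_shifting (kernel_pair_eqrel Hg) (kernel_pair_eqrel Hp)
                (kernel_pair_eqrel He)) as Hshift.
  unfold inrel in Hshift; simpl in Hshift.
  setoid_rewrite (kernel_pair_mem Hg) in Hshift.
  setoid_rewrite (kernel_pair_mem Hp) in Hshift.
  setoid_rewrite (kernel_pair_mem He) in Hshift.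
  exact (Hshift Hmeet Hle W a b c d).
Qed.

End Shifting.

Section Regular.
Context {C : Category}.

Lemma regular_epi_lift (HR : regular_category C) {P X T : C} (x : P ~> X) (h : T ~> X) :
  regular_epi x ->
  exists (E : C) (e : E ~> T) (a : E ~> P), regular_epi e /\ x ∘ a = h ∘ e.
Proof.
  intro Hx. destruct HR as [[_ Hpb] [_ Hstab]].
  destruct (Hpb _ _ _ x h) as [E [a [e He]]].
  exists E, e, a. split; [exact (Hstab _ _ _ _ _ _ _ _ He Hx) | exact (pullback_commutes He)].
Qed.

Lemma jointly_monic_of_regular_cover (HR : regular_category C) {P X Y U : C}
    (x : P ~> X) (f : X ~> Y) (u : X ~> U) :
  regular_epi x ->
  (forall (T : C) (a b : T ~> P),
      f ∘ (x ∘ a) = f ∘ (x ∘ b) -> u ∘ (x ∘ a) = u ∘ (x ∘ b) -> x ∘ a = x ∘ b) ->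
  jointly_monic f u.
Proof.
  intros Hx Hsep T h k Ef Eu.
  destruct (regular_epi_lift HR x h Hx) as [E1 [e1 [a1 [He1 Ha1]]]].
  destruct (regular_epi_lift HR x (k ∘ e1) Hx) as [E2 [e2 [a2 [He2 Ha2]]]].
  assert (Hlift : x ∘ (a1 ∘ e2) = x ∘ a2).
  { apply Hsep; rewrite (triangle_precomp Ha1), Ha2; reassoc;
      [exact (square_precomp Ef _) | exact (square_precomp Eu _)]. }
  apply (regular_epi_epi e1 He1), (regular_epi_epi e2 He2).
  rewrite (triangle_precomp Ha1), Ha2 in Hlift. reassoc_in Hlift. reassoc. exact Hlift.
Qed.

End Regular.

Section Squares.
Context {C : Category} {P Z X Y U V : C} {phi : P ~> Z} {x : P ~> X} {f : X ~> Y} {y : Z ~> Y}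
  {u : X ~> U} {v : Y ~> V} {w : U ~> V}.
Hypotheses (H_fx : f ∘ x = y ∘ phi) (H_wu : w ∘ u = v ∘ f)
  (H_outer : is_pullback w (v ∘ y) (u ∘ x) phi).

Lemma pullback_pasting_left : is_pullback w v u f -> is_pullback f y x phi.
Proof.
  intro Hright. split; [exact H_fx|].
  intros Q q1 q2 E.
  destruct (pullback_factor H_outer (u ∘ q1) q2) as [h [Hh1 Hh2]].
  { rewrite (square_precomp H_wu), E. reassoc. reflexivity. }
  exists h. split.
  - split; [|exact Hh2].
    apply (pullback_legs_jointly_monic Hright).
    + reassoc_in Hh1. exact Hh1.
    + rewrite (square_precomp H_fx), Hh2. symmetry. exact E.
  - intros h' [E1 E2]. apply (pullback_legs_jointly_monic H_outer).
    + rewrite Hh1, <- E1. reassoc. reflexivity.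
    + rewrite Hh2, E2. reflexivity.
Qed.

Lemma pullback_right_of_outer (HR : regular_category C) :
  regular_epi y -> jointly_monic f u -> is_pullback w v u f.
Proof.
  intros Hy Hfu. split; [exact H_wu|].
  intros Q q1 q2 E.
  destruct (regular_epi_lift HR y q2 Hy) as [E0 [e [z [He Hz]]]].
  destruct (pullback_factor H_outer (q1 ∘ e) z) as [p [Hp1 Hp2]].
  { reassoc. rewrite Hz, (square_precomp E). reflexivity. }
  destruct (regular_epi_factor e (x ∘ p) f u q2 q1 He Hfu) as [k [_ [Hk1 Hk2]]].
  { rewrite (square_precomp H_fx), Hp2. exact Hz. }
  { reassoc_in Hp1. exact Hp1. }
  exists k. split; [split; assumption|].
  intros k' [E1 E2]. apply Hfu; congruence.
Qed.

End Squares.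

Lemma split_square_jointly_monic {C : Category}
    (HC_reg : regular_category C) (HC_gumm : gumm_category C)
    {P Z X Y U : C} (phi : P ~> Z) (sigma : Z ~> P) (x : P ~> X) (f : X ~> Y)
    (s : Y ~> X) (y : Z ~> Y) (u : X ~> U) :
  phi ∘ sigma = idm Z -> x ∘ sigma = s ∘ y -> f ∘ x = y ∘ phi ->
  regular_epi x -> jointly_monic (u ∘ x) phi -> jointly_monic f u.
Proof.
  intros H_phisigma H_xsigma H_fx H_x Hmonic.
  apply (jointly_monic_of_regular_cover HC_reg x f u H_x).
  intros T a b Ef Eu.
  apply (gumm_kernel_shifting (proj1 HC_reg) HC_gumm (u ∘ x) phi x) with
    (c := sigma ∘ (phi ∘ a)) (d := sigma ∘ (phi ∘ b)).
  - intros Q a' b' Eg Ep. f_equal. exact (Hmonic Q a' b' Eg Ep).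
  - intros Q a' b' E. reassoc. rewrite E. reflexivity.
  - rewrite !(square_precomp H_xsigma), <- !(square_precomp H_fx), Ef. reflexivity.
  - reassoc. exact Eu.
  - rewrite (triangle_precomp H_phisigma), comp_id_l. reflexivity.
  - rewrite (triangle_precomp H_phisigma), comp_id_l. reflexivity.
Qed.

Theorem proposition4p1 (C : Category)
    (HC_reg : regular_category C) (HC_gumm : gumm_category C)
    (P Z X Y U V : C)
    (phi : P ~> Z) (sigma : Z ~> P) (x : P ~> X) (f : X ~> Y) (s : Y ~> X)
    (y : Z ~> Y) (u : X ~> U) (v : Y ~> V) (w : U ~> V)
    (H_phisigma : phi ∘ sigma = idm Z) (H_fs : f ∘ s = idm Y)
    (H_xsigma : x ∘ sigma = s ∘ y) (H_fx : f ∘ x = y ∘ phi)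
    (H_x : regular_epi x) (H_y : regular_epi y)
    (H_wu : w ∘ u = v ∘ f)
    (H_outer : is_pullback w (v ∘ y) (u ∘ x) phi) :
  is_pullback f y x phi /\ is_pullback w v u f.
Proof.
  assert (Hfu : jointly_monic f u).
  { exact (split_square_jointly_monic HC_reg HC_gumm phi sigma x f s y u
             H_phisigma H_xsigma H_fx H_x (pullback_legs_jointly_monic H_outer)). }
  assert (Hright : is_pullback w v u f).
  { exact (pullback_right_of_outer H_fx H_wu H_outer HC_reg H_y Hfu). }
  split; [|exact Hright].
  exact (pullback_pasting_left H_fx H_wu H_outer Hright).
Qed.
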